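(* The map $\mathbb B_{\mathrm{cut}}\to\mathbb V_{\mathrm{vt}}(\overline K)$, $B\mapsto\omega_B$ (taking the equivalence class of $\omega_B$), is an isomorphism of posets, where $\mathbb B_{\mathrm{cut}}$ is ordered by $B\le C\iff B\supseteq C$.
   Context: $(K,v)$ is a valued field, $\overline K$ an algebraic closure, $\bar v$ a fixed extension of $v$ to $\overline K$ with value group $\Gamma$. A cut is a pair $\delta=(\delta^L,\delta^R)$ of subsets of $\Gamma$ with $\delta^L<\delta^R$, $\delta^L\cup\delta^R=\Gamma$; $B(a,\delta)=\{c\in\overline K\mid\bar v(c-a)>\delta^L\}$ and $\mathbb B_{\mathrm{cut}}$ is the set of these subsets of $\overline K$. $\Gamma(\delta)=x_\delta\mathbb Z\oplus\Gamma$ ordered with $\delta^L<x_\delta<\delta^R$, and $\omega_{B(a,\delta)}(\sum a_n(x-a)^n)=\min_n\{\bar v(a_n)+nx_\delta\}$. $\mathbb V_{\mathrm{vt}}(\overline K)$ is the set of equivalence classes (under $\nu=\iota\circ\mu$ for an order isomorphism $\iota$ of value groups) of value-transcendental valuations on $\overline K(x)$ extending $\bar v$ (i.e. $\Gamma_\omega/\Gamma$ not torsion). Its partial order: for classes $\mu\ne\nu$, $\mu\le\nu$ iff for every $f\in\overline K[x]$ there is $\gamma\in\Gamma$ with $\mu(f)\le\gamma\le\nu(f)$ (this is independent of representatives). *)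

From HB Require Import structures.
From mathcomp Require Import all_boot all_order all_algebra.
From Stdlib Require Import ClassicalEpsilon.

Set Implicit Arguments.
Unset Strict Implicit.
Unset Printing Implicit Defensive.

Import GRing.Theory Num.Theory.
Local Open Scope ring_scope.

Definition is_oag (G : zmodType) (le : G -> G -> Prop) : Prop :=
  [/\ (forall x, le x x),
      (forall x y, le x y -> le y x -> x = y),
      (forall x y z, le x y -> le y z -> le x z),
      (forall x y, le x y \/ le y x)
    & (forall x y z, le x y -> le (x + z) (y + z))].

Definition ltof (G : Type) (le : G -> G -> Prop) (x y : G) : Prop :=
  le x y /\ x <> y.

(** [v : L -> Γ] is a valuation on the field [L] whose value group is
    (the ordered abelian group) [Γ]; the value of [0] (= infinity) is
    never used. *)
Definition is_valuation (L : fieldType) (Γ : zmodType) (le : Γ -> Γ -> Prop)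
    (v : L -> Γ) : Prop :=
  [/\ is_oag le,
      (forall x y, x != 0 -> y != 0 -> v (x * y) = v x + v y),
      (forall x y, x != 0 -> y != 0 -> x + y != 0 ->
         le (v x) (v (x + y)) \/ le (v y) (v (x + y)))
    & (forall g, exists x, x != 0 /\ v x = g)].

Record cut (Γ : Type) := Cut { cutL : Γ -> Prop; cutR : Γ -> Prop }.

Definition is_cut (Γ : Type) (le : Γ -> Γ -> Prop) (d : cut Γ) : Prop :=
  (forall a b, cutL d a -> cutR d b -> ltof le a b) /\
  (forall g, cutL d g \/ cutR d g).

(** The ball [B(a, δ) = {c | v(c - a) > δ^L}] (with [v 0 = ∞]). *)
Definition ball (L : fieldType) (Γ : zmodType) (le : Γ -> Γ -> Prop)
    (v : L -> Γ) (a : L) (d : cut Γ) : L -> Prop :=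
  fun c => c = a \/ (forall l, cutL d l -> ltof le l (v (c - a))).

(** A (Krull) valuation on [L[x]] (equivalently on [L(x)]) together with
    its codomain ordered group and the embedding of [Γ] in it.  The value
    at the zero polynomial (= infinity) is never used. *)
Record pvaluation (L : fieldType) (Γ : zmodType) := PVal {
  pv_G : zmodType;
  pv_le : pv_G -> pv_G -> Prop;
  pv_emb : Γ -> pv_G;
  pv_fun : {poly L} -> pv_G }.

Definition is_ext_val (L : fieldType) (Γ : zmodType) (le : Γ -> Γ -> Prop)
    (v : L -> Γ) (w : pvaluation L Γ) : Prop :=
  is_oag (@pv_le _ _ w) /\
  [/\ (forall a b, pv_emb w (a + b) = pv_emb w a + pv_emb w b),
      (forall a b, pv_le (pv_emb w a) (pv_emb w b) <-> le a b),
      (forall c, c != 0 -> pv_fun w c%:P = pv_emb w (v c)),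
      (forall f g, f != 0 -> g != 0 -> pv_fun w (f * g) = pv_fun w f + pv_fun w g)
    & (forall f g, f != 0 -> g != 0 -> f + g != 0 ->
         pv_le (pv_fun w f) (pv_fun w (f + g)) \/
         pv_le (pv_fun w g) (pv_fun w (f + g)))].

Definition in_vgroup (L : fieldType) (Γ : zmodType) (w : pvaluation L Γ)
    (g : pv_G w) : Prop :=
  exists f h, [/\ f != 0, h != 0 & g = pv_fun w f - pv_fun w h].
Arguments in_vgroup {L Γ} w g.

Definition value_transcendental (L : fieldType) (Γ : zmodType)
    (w : pvaluation L Γ) : Prop :=
  exists g, in_vgroup w g /\
    forall n : nat, (0 < n)%N -> forall c : Γ, g *+ n <> pv_emb w c.

Definition val_equiv (L : fieldType) (Γ : zmodType) (w1 w2 : pvaluation L Γ)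
    : Prop :=
  exists iota : pv_G w1 -> pv_G w2,
  [/\ (forall a, in_vgroup w1 a -> in_vgroup w2 (iota a)),
      (forall a b, in_vgroup w1 a -> in_vgroup w1 b -> iota (a + b) = iota a + iota b),
      (forall a b, in_vgroup w1 a -> in_vgroup w1 b ->
         (pv_le a b <-> pv_le (iota a) (iota b))),
      (forall c, in_vgroup w2 c -> exists2 a, in_vgroup w1 a & iota a = c)
    & (forall f, f != 0 -> pv_fun w2 f = iota (pv_fun w1 f))].

Definition val_le (L : fieldType) (Γ : zmodType) (w1 w2 : pvaluation L Γ)
    : Prop :=
  val_equiv w1 w2 \/
  (forall f : {poly L}, f != 0 -> exists c : Γ,
     pv_le (pv_fun w1 f) (pv_emb w1 c) /\ pv_le (pv_emb w2 c) (pv_fun w2 f)).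

(** The ordered group [Γ(δ) = x_δ Z ⊕ Γ], represented by [int * Γ]
    ([(n, γ)] stands for [n x_δ + γ]), ordered so that [δ^L < x_δ < δ^R]:
    [(m,β) ≤ (n,β')] iff [k x_δ + b ≤ 0] with [k = m - n], [b = β - β'];
    for [k > 0] this means [-b/k ∈ δ^R], for [k < 0] it means [b/|k| ∈ δ^L]
    ([Γ] being divisible). *)
Definition cut_le (Γ : zmodType) (le : Γ -> Γ -> Prop) (d : cut Γ)
    (p q : int * Γ) : Prop :=
  let k := p.1 - q.1 in
  let b := p.2 - q.2 in
  if k == 0 then le b 0
  else if 0 < k then exists r, cutR d r /\ le (r *~ k + b) 0
  else exists l, cutL d l /\ le b (l *~ (- k)).

(** [ω_{B(a,δ)}(Σ a_n (x-a)^n) = min_n (v(a_n) + n x_δ)] (over [a_n ≠ 0]). *)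
Definition omega_fun (L : fieldType) (Γ : zmodType) (le : Γ -> Γ -> Prop)
    (v : L -> Γ) (a : L) (d : cut Γ) (f : {poly L}) : int * Γ :=
  let g := f \Po ('X + a%:P) in
  epsilon (inhabits (0 : int * Γ)) (fun p =>
    (exists2 n : nat, (n < size g)%N /\ g`_n != 0 & p = (n%:Z, v g`_n)) /\
    (forall m : nat, (m < size g)%N -> g`_m != 0 ->
        cut_le le d p (m%:Z, v g`_m))).

Definition omegaB (L : fieldType) (Γ : zmodType) (le : Γ -> Γ -> Prop)
    (v : L -> Γ) (a : L) (d : cut Γ) : pvaluation L Γ :=
  @PVal L Γ (int * Γ)%type (cut_le le d)
    (fun c => (0%:Z, c)) (omega_fun le v a d).

(** Write [x_δ] for the generator of [Γ(δ)] over [Γ].  The valuation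
    [ω = ω_{B(a,δ)}] sends [x - c] to [x_δ] when [c ∈ B(a,δ)] and to [v(c - a) ∈ Γ]
    otherwise; as [L] is algebraically closed, every polynomial is a constant times
    a product of such linear factors, so [ω] is determined by the ball, and the ball
    is recovered from [ω] as the set of [c] with [ω(x - c) ∉ Γ].  Conversely, a
    value-transcendental [w] must have some [t = w(x - a)] that is not torsion over
    [Γ] (the values of linear factors generate the value group); the position of
    [t] among the elements of [Γ] defines a cut [δ], and [n x_δ + γ ↦ n t + γ]
    identifies [ω_{B(a,δ)}] with [w].  Finally [B ⊇ C] strictly iff some [g ∈ Γ]
    lies between the two cuts, and [g] (or [v(c - b)]) then separates the values of
    [ω_B] and [ω_C] on every linear factor. *)

From HB Require Import structures.
From mathcomp Require Import all_boot all_order all_algebra.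
From Stdlib Require Import Classical ClassicalEpsilon.
Import Order.TTheory GRing.Theory Num.Theory.
Local Open Scope ring_scope.

Set Implicit Arguments.
Unset Strict Implicit.
Unset Printing Implicit Defensive.

Section OrderedGroup.
Variables (G : zmodType) (le : G -> G -> Prop).
Hypothesis Hle : is_oag le.

Lemma oag_refl x : le x x. Proof. by case: Hle => h _ _ _ _; apply: h. Qed.
Lemma oag_anti x y : le x y -> le y x -> x = y. Proof. by case: Hle => _ h _ _ _; apply: h. Qed.
Lemma oag_trans x y z : le x y -> le y z -> le x z.
Proof. by case: Hle => _ _ h _ _; apply: h. Qed.
Lemma oag_total x y : le x y \/ le y x. Proof. by case: Hle => _ _ _ h _; apply: h. Qed.
Lemma oag_leDr x y z : le x y -> le (x + z) (y + z).
Proof. by case: Hle => _ _ _ _ h; apply: h. Qed.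

Lemma oag_leDl x y z : le x y -> le (z + x) (z + y).
Proof. by move=> h; rewrite ![z + _]addrC; apply: oag_leDr. Qed.

Lemma oag_leD a b c e : le a b -> le c e -> le (a + c) (b + e).
Proof. by move=> h1 h2; apply: (oag_trans (oag_leDr c h1)); apply: oag_leDl. Qed.

Lemma oag_leN x y : le x y -> le (- y) (- x).
Proof.
move=> h; have := oag_leDr (- x - y) h.
by rewrite addrA subrr add0r addrCA subrr addr0.
Qed.

Lemma oag_subr_le0 x y : le (x - y) 0 <-> le x y.
Proof.
split=> h; first by have := oag_leDr y h; rewrite subrK add0r.
by have := oag_leDr (- y) h; rewrite subrr.
Qed.

Lemma oag_addr_le0 a b : le (a + b) 0 <-> le b (- a).
Proof.
split=> h; first by have := oag_leDl (- a) h; rewrite addKr addr0.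
by have := oag_leDl a h; rewrite subrr.
Qed.

Lemma oag_lt_le_trans x y z : ltof le x y -> le y z -> ltof le x z.
Proof.
move=> [h1 h2] h3; split; first exact: oag_trans h3.
by move=> e; subst; apply: h2; apply: oag_anti.
Qed.

Lemma oag_ltNge x y : ltof le x y -> ~ le y x.
Proof. by move=> [h1 h2] h3; apply: h2; apply: oag_anti. Qed.

Lemma oag_ltD a b c e : ltof le a b -> le c e -> ltof le (a + c) (b + e).
Proof.
move=> [h1 h2] h3; split; first exact: oag_leD.
move=> E; apply: h2; apply: oag_anti => //.
have : le (b + c) (a + c) by rewrite E; apply: oag_leDl.
by move/(oag_leDr (- c)); rewrite !addrK.
Qed.

Lemma oag_lerMn x y n : le x y -> le (x *+ n) (y *+ n).
Proof.
move=> h; elim: n => [|n IH]; first by rewrite !mulr0n; apply: oag_refl.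
by rewrite !mulrS; apply: oag_leD.
Qed.

Lemma oag_ltrMn x y n : ltof le x y -> (0 < n)%N -> ltof le (x *+ n) (y *+ n).
Proof.
move=> h; case: n => // n _; elim: n => [|n IH]; first by rewrite !mulr1n.
by rewrite mulrS [y *+ _]mulrS; apply: oag_ltD => //; case: IH.
Qed.

Lemma oag_mulIn (x y : G) n : (0 < n)%N -> x *+ n = y *+ n -> x = y.
Proof.
move=> n0 E; case: (oag_total x y) => h; apply: NNPP => ne.
  by have [_] := oag_ltrMn (conj h ne) n0; apply.
by have [_] := oag_ltrMn (conj h (fun e => ne (esym e))) n0; apply.
Qed.

Lemma oag_lerMz x y k : 0 <= k -> le x y -> le (x *~ k) (y *~ k).
Proof.
case: k => n k0 h; first by rewrite -!pmulrn; apply: oag_lerMn.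
by rewrite NegzE oppr_ge0 in k0.
Qed.

Lemma oag_lerMzN x y k : k <= 0 -> le x y -> le (y *~ k) (x *~ k).
Proof.
move=> k0 h; have := @oag_lerMz x y (- k); rewrite oppr_ge0 !mulrNz => /(_ k0 h).
by move/oag_leN; rewrite !opprK.
Qed.

Lemma oag_ltrMz x y k : 0 < k -> ltof le x y -> ltof le (x *~ k) (y *~ k).
Proof.
case: k => n k0 h; first by rewrite -!pmulrn; apply: oag_ltrMn.
by rewrite NegzE oppr_gt0 in k0.
Qed.

End OrderedGroup.

Definition divisible (G : zmodType) : Prop :=
  forall (n : nat) (b : G), (0 < n)%N -> exists y, y *+ n = b.

Section CutOrder.
Variables (Γ : zmodType) (le : Γ -> Γ -> Prop) (d : cut Γ).
Hypotheses (Hle : is_oag le) (Hd : is_cut le d).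

Lemma cut_lt l r : cutL d l -> cutR d r -> ltof le l r.
Proof. by case: Hd => h _; apply: h. Qed.

Lemma cut_cover g : cutL d g \/ cutR d g.
Proof. by case: Hd. Qed.

Lemma cutLNR g : cutL d g <-> ~ cutR d g.
Proof.
split; first by move=> h1 h2; case: (cut_lt h1 h2).
by move=> h; case: (cut_cover g).
Qed.

Lemma cutL_le x y : cutL d y -> le x y -> cutL d x.
Proof.
move=> hy hxy; case: (cut_cover x) => // hx.
by case: (oag_ltNge Hle (cut_lt hy hx)).
Qed.

Lemma cutR_ge x y : cutR d x -> le x y -> cutR d y.
Proof.
move=> hx hxy; case: (cut_cover y) => // hy.
by case: (oag_ltNge Hle (cut_lt hy hx)).
Qed.

(** [cut_npos k b] means [k x_δ + b <= 0] in [Γ(δ)]. *)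
Definition cut_npos (k : int) (b : Γ) : Prop :=
  if k == 0 then le b 0
  else if 0 < k then exists r, cutR d r /\ le (r *~ k + b) 0
  else exists l, cutL d l /\ le b (l *~ (- k)).

Lemma cut_leE p q : cut_le le d p q = cut_npos (p.1 - q.1) (p.2 - q.2).
Proof. by []. Qed.

Lemma cut_npos0 b : cut_npos 0 b <-> le b 0.
Proof. by rewrite /cut_npos eqxx. Qed.

Lemma cut_nposP k b : 0 < k ->
  (cut_npos k b <-> exists r, cutR d r /\ le (r *~ k + b) 0).
Proof. by move=> k0; rewrite /cut_npos gt_eqF // k0. Qed.

Lemma cut_nposN k b : k < 0 ->
  (cut_npos k b <-> exists l, cutL d l /\ le b (l *~ (- k))).
Proof. by move=> k0; rewrite /cut_npos lt_eqF // lt_gtF. Qed.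

Lemma cut_npos_add0 b1 k2 b2 : le b1 0 -> cut_npos k2 b2 -> cut_npos k2 (b1 + b2).
Proof.
move=> h1; case: (ltrgtP k2 0) => [k2n|k2p|->].
- move/(cut_nposN _ k2n) => [l [hl h2]]; apply/(cut_nposN _ k2n); exists l.
  by split => //; rewrite -[_ *~ _]add0r; apply: (oag_leD Hle).
- move/(cut_nposP _ k2p) => [r [hr h2]]; apply/(cut_nposP _ k2p); exists r.
  by split => //; rewrite addrCA -[0]addr0; apply: (oag_leD Hle).
- by move/cut_npos0 => h2; apply/cut_npos0; rewrite -[0]addr0; apply: (oag_leD Hle).
Qed.

Lemma cut_npos_add_pn k1 b1 k2 b2 : 0 < k1 -> k2 < 0 ->
  cut_npos k1 b1 -> cut_npos k2 b2 -> cut_npos (k1 + k2) (b1 + b2).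
Proof.
move=> k1p k2n /(cut_nposP _ k1p) [r [hr h1]] /(cut_nposN _ k2n) [l [hl h2]].
have lr : le l r by case: (cut_lt hl hr).
move/(oag_addr_le0 Hle): h1 => h1.
case: (ltrgtP (k1 + k2) 0) => [kn|kp|k0].
- apply/(cut_nposN _ kn); exists l; split => //.
  rewrite opprD mulrzDr; apply: (oag_leD Hle) => //.
  apply: (oag_trans Hle h1); rewrite -mulrNz; apply: (oag_lerMzN Hle) => //.
  by rewrite oppr_le0 ltW.
- apply/(cut_nposP _ kp); exists r; split => //.
  rewrite mulrzDr addrACA -[0]addr0; apply: (oag_leD Hle).
    exact/(oag_addr_le0 Hle).
  apply/(oag_addr_le0 Hle); apply: (oag_trans Hle h2); rewrite -mulrNz.
  by apply: (oag_lerMz Hle) => //; rewrite oppr_ge0 ltW.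
- have ek2 : k2 = - k1 by apply/eqP; rewrite -addr_eq0 addrC k0.
  rewrite k0; apply/cut_npos0; rewrite ek2 opprK in h2.
  rewrite -(subrr (r *~ k1)) addrC; apply: (oag_leD Hle) => //.
  by apply: (oag_trans Hle h2); apply: (oag_lerMz Hle) => //; rewrite ltW.
Qed.

Lemma cut_npos_add_pp k1 b1 k2 b2 : 0 < k1 -> 0 < k2 ->
  cut_npos k1 b1 -> cut_npos k2 b2 -> cut_npos (k1 + k2) (b1 + b2).
Proof.
move=> k1p k2p /(cut_nposP _ k1p) [r1 [hr1 h1]] /(cut_nposP _ k2p) [r2 [hr2 h2]].
apply/cut_nposP; first by rewrite addr_gt0.
have hM r r' k b : 0 < k -> le r r' -> le (r' *~ k + b) 0 -> le (r *~ k + b) 0.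
  move=> kp hr h; apply: (oag_trans Hle _ h); apply: (oag_leDr Hle).
  by apply: (oag_lerMz Hle) => //; apply: ltW.
case: (oag_total Hle r1 r2) => h; [exists r1 | exists r2]; split => //;
  rewrite mulrzDr addrACA -[0]addr0; apply: (oag_leD Hle) => //; exact: hM h _.
Qed.

Lemma cut_npos_add_nn k1 b1 k2 b2 : k1 < 0 -> k2 < 0 ->
  cut_npos k1 b1 -> cut_npos k2 b2 -> cut_npos (k1 + k2) (b1 + b2).
Proof.
move=> k1n k2n /(cut_nposN _ k1n) [l1 [hl1 h1]] /(cut_nposN _ k2n) [l2 [hl2 h2]].
apply/cut_nposN; first by rewrite -oppr_gt0 opprD addr_gt0 // oppr_gt0.
have hM l l' k b : k < 0 -> le l l' -> le b (l *~ - k) -> le b (l' *~ - k).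
  move=> kn hl h; apply: (oag_trans Hle h); apply: (oag_lerMz Hle) => //.
  by rewrite oppr_ge0 ltW.
case: (oag_total Hle l1 l2) => h; [exists l2 | exists l1]; split => //;
  rewrite opprD mulrzDr; apply: (oag_leD Hle) => //; exact: hM h _.
Qed.

Lemma cut_npos_add k1 b1 k2 b2 :
  cut_npos k1 b1 -> cut_npos k2 b2 -> cut_npos (k1 + k2) (b1 + b2).
Proof.
case: (ltrgtP k1 0) => [k1n|k1p|->]; last first.
  by move/cut_npos0 => h1 h2; rewrite add0r; apply: cut_npos_add0.
all: case: (ltrgtP k2 0) => [k2n|k2p|->]; last first.
all: try by move=> h1 /cut_npos0 h2; rewrite addr0 addrC; apply: cut_npos_add0.
all: first [exact: cut_npos_add_nn | exact: cut_npos_add_pp | exact: cut_npos_add_pn |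
  by move=> h1 h2; rewrite addrC [b1 + _]addrC; apply: cut_npos_add_pn].
Qed.

Lemma cut_npos_anti k b : cut_npos k b -> cut_npos (- k) (- b) -> k = 0 /\ b = 0.
Proof.
case: (ltrgtP k 0) => [kn|kp|->].
- move/(cut_nposN _ kn) => [l [hl h1]].
  have kp : 0 < - k by rewrite oppr_gt0.
  move/(cut_nposP _ kp) => [r [hr /(oag_addr_le0 Hle)/(oag_leN Hle) h2]].
  rewrite !opprK in h2; exfalso.
  exact: (oag_ltNge Hle (oag_ltrMz Hle kp (cut_lt hl hr)) (oag_trans Hle h2 h1)).
- move/(cut_nposP _ kp) => [r [hr /(oag_addr_le0 Hle) h1]].
  have kn : - k < 0 by rewrite oppr_lt0.
  move/(cut_nposN _ kn) => [l [hl /(oag_leN Hle) h2]]; exfalso.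
  rewrite !opprK in h2.
  have := oag_leN Hle (oag_trans Hle h2 h1); rewrite !opprK.
  exact: (oag_ltNge Hle (oag_ltrMz Hle kp (cut_lt hl hr))).
- move/cut_npos0 => h1; rewrite oppr0 => /cut_npos0 /(oag_leN Hle) h2.
  by split => //; apply: (oag_anti Hle h1); rewrite opprK oppr0 in h2.
Qed.

(** Totality is where the divisibility of [Γ] enters: [k x_δ + b] is compared
    with [0] through the position of [-b/k] with respect to [δ]. *)
Lemma cut_npos_total (Hdiv : divisible Γ) k b : cut_npos k b \/ cut_npos (- k) (- b).
Proof.
wlog kp : k b / 0 <= k.
  move=> wlog_kp; case: (lerP 0 k) => [|kn]; first exact: wlog_kp.
  by have := wlog_kp (- k) (- b); rewrite oppr_ge0 !opprK => /(_ (ltW kn)) [];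
    [right|left].
case: (ltrgtP k 0) kp => [//|{}kp _|-> _]; last first.
  rewrite oppr0; case: (oag_total Hle b 0) => h; [left|right]; apply/cut_npos0 => //.
  by rewrite -oppr0; apply: (oag_leN Hle).
have [n En] : exists n : nat, k = n%:Z by case: k kp => [n|n] //; exists n.
have n0 : (0 < n)%N by rewrite -ltz_nat -En.
have [y Ey] := Hdiv n (- b) n0.
have kn : - k < 0 by rewrite oppr_lt0.
case: (cut_cover y) => hy; [right; apply/(cut_nposN _ kn) | left; apply/(cut_nposP _ kp)];
  exists y; split => //; rewrite ?opprK En -pmulrn Ey ?addNr; exact: (oag_refl Hle).
Qed.

Lemma cut_le_oag (Hdiv : divisible Γ) : is_oag (cut_le le d).
Proof.
split.
- by move=> x; rewrite cut_leE !subrr; apply/cut_npos0; apply: (oag_refl Hle).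
- move=> [x1 x2] [y1 y2]; rewrite !cut_leE /= => h1.
  rewrite -[y1 - _]opprB -[y2 - _]opprB => /(cut_npos_anti h1) [/eqP + /eqP].
  by rewrite !subr_eq0 => /eqP -> /eqP ->.
- move=> x y z; rewrite !cut_leE => h1 h2; have := cut_npos_add h1 h2.
  by rewrite !addrA !subrK.
- by move=> x y; rewrite !cut_leE -[y.1 - _]opprB -[y.2 - _]opprB; apply: cut_npos_total.
- by move=> x y z; rewrite !cut_leE /= [y.1 + _]addrC [y.2 + _]addrC !addrKA.
Qed.

Lemma cut_le_snd (k : int) x y : cut_le le d (k, x) (k, y) <-> le x y.
Proof. by rewrite cut_leE /= subrr; apply: iff_trans (cut_npos0 _) (oag_subr_le0 Hle _ _). Qed.

Lemma cut_lt_snd (k : int) x y : ltof (cut_le le d) (k, x) (k, y) <-> ltof le x y.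
Proof.
by rewrite /ltof cut_le_snd; split=> -[h ne]; split=> // e; apply: ne; [rewrite e | case: e].
Qed.

Lemma cut_le_x_const g : cut_le le d (1, 0) (0, g) <-> cutR d g.
Proof.
rewrite cut_leE /= subr0 sub0r cut_nposP //; split.
  move=> [r [hr /(oag_addr_le0 Hle)/(oag_leN Hle)]]; rewrite !opprK mulr1z.
  exact: cutR_ge.
by move=> hg; exists g; split => //; rewrite subrr; apply: (oag_refl Hle).
Qed.

Lemma cut_le_const_x g : cut_le le d (0, g) (1, 0) <-> cutL d g.
Proof.
rewrite cut_leE /= sub0r subr0 cut_nposN // opprK; split.
  by move=> [l [hl h]]; apply: (cutL_le hl).
by move=> hg; exists g; split => //; apply: (oag_refl Hle).
Qed.

End CutOrder.

Lemma cut_le_eq (Γ : zmodType) (le : Γ -> Γ -> Prop) (d e : cut Γ) :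
  is_cut le d -> is_cut le e -> (forall g, cutR d g <-> cutR e g) ->
  forall p q, cut_le le d p q <-> cut_le le e p q.
Proof.
move=> Hd He hR; have hL g : cutL d g <-> cutL e g.
  by rewrite (cutLNR Hd) (cutLNR He); split=> h1 h2; apply/h1/hR.
move=> p q; rewrite !cut_leE /cut_npos; case: ifP => _ //; case: ifP => _;
  by split=> -[r [h1 h2]]; exists r; split => //; first [exact/hR | exact/hL].
Qed.

Lemma ultra_strict (V G : zmodType) (le : G -> G -> Prop) (Hle : is_oag le)
    (phi : V -> G) (phiN : forall x, x != 0 -> phi (- x) = phi x)
    (phiD : forall x y, x != 0 -> y != 0 -> x + y != 0 ->
       le (phi x) (phi (x + y)) \/ le (phi y) (phi (x + y)))
    x y : x != 0 -> y != 0 -> ltof le (phi x) (phi y) ->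
  x + y != 0 /\ phi (x + y) = phi x.
Proof.
move=> x0 y0 lxy.
have xy0 : x + y != 0.
  by apply: contraPneq (proj2 lxy) => /eqP; rewrite addr_eq0 => /eqP ->; rewrite phiN.
split => //; apply: (oag_anti Hle).
  have ny0 : - y != 0 by rewrite oppr_eq0.
  case: (phiD _ _ xy0 ny0); rewrite addrK ?phiN // => h.
  by case: (oag_ltNge Hle lxy).
case: (phiD x y x0 y0 xy0) => // h.
by apply: (oag_trans Hle _ h); case: lxy.
Qed.

Lemma ltn_size_coef (R : nzRingType) (g : {poly R}) n : g`_n != 0 -> (n < size g)%N.
Proof. by rewrite ltnNge; apply: contra => h; rewrite nth_default. Qed.

Section Valuation.
Variables (L : fieldType) (Γ : zmodType) (le : Γ -> Γ -> Prop) (v : L -> Γ).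
Hypothesis hv : is_valuation le v.

Lemma val_oag : is_oag le. Proof. by case: hv. Qed.
Lemma valM x y : x != 0 -> y != 0 -> v (x * y) = v x + v y.
Proof. by case: hv => _ h _ _; apply: h. Qed.
Lemma val_ultra x y : x != 0 -> y != 0 -> x + y != 0 ->
  le (v x) (v (x + y)) \/ le (v y) (v (x + y)).
Proof. by case: hv => _ _ h _; apply: h. Qed.
Lemma val_surj g : exists x, x != 0 /\ v x = g.
Proof. by case: hv => _ _ _ h; apply: h. Qed.

Lemma val1 : v 1 = 0.
Proof.
have := valM (oner_neq0 L) (oner_neq0 L); rewrite mulr1 => e.
by apply: (@addrI _ (v 1)); rewrite addr0 -e.
Qed.

Lemma valN1 : v (-1) = 0.
Proof.
have n1 : (-1 : L) != 0 by rewrite oppr_eq0 oner_neq0.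
have := valM n1 n1; rewrite mulrNN mulr1 val1 => e.
by apply: (@oag_mulIn _ _ val_oag _ _ 2) => //; rewrite mulr2n -e mul0rn.
Qed.

Lemma valN x : x != 0 -> v (- x) = v x.
Proof.
move=> x0; have n1 : (-1 : L) != 0 by rewrite oppr_eq0 oner_neq0.
by rewrite -mulN1r valM // valN1 add0r.
Qed.

Lemma val_distC x y : v (x - y) = v (y - x).
Proof.
have [e|xy] := eqVneq (y - x) 0; first by rewrite -opprB e oppr0.
by rewrite -opprB valN.
Qed.

Lemma valX x n : x != 0 -> v (x ^+ n) = v x *+ n.
Proof.
move=> x0; elim: n => [|n IH]; first by rewrite expr0 val1 mulr0n.
by rewrite exprS valM ?expf_neq0 // IH mulrS.
Qed.

Lemma val_strict x y : x != 0 -> y != 0 -> ltof le (v x) (v y) ->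
  x + y != 0 /\ v (x + y) = v x.
Proof. exact: (ultra_strict val_oag valN val_ultra). Qed.

Lemma val_sum_ultra (I : Type) (s : seq I) (P : pred I) (F : I -> L) :
  \sum_(i <- s | P i) F i != 0 ->
  exists i, [/\ P i, F i != 0 & le (v (F i)) (v (\sum_(i <- s | P i) F i))].
Proof.
elim: s => [|i s IH]; first by rewrite big_nil eqxx.
rewrite big_cons; case: ifP => Pi; last exact: IH.
set S := \sum_(j <- s | P j) F j.
have [->|Fi0] := eqVneq (F i) 0; first by rewrite add0r => /IH.
have [->|S0] := eqVneq S 0.
  by rewrite addr0 => _; exists i; split => //; apply: (oag_refl val_oag).
move=> iS0; case: (val_ultra Fi0 S0 iS0) => h; first by exists i.
have [j [Pj Fj hj]] := IH S0; exists j; split => //.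
exact: (oag_trans val_oag hj h).
Qed.

Lemma val_sum_strict (n : nat) (F : 'I_n -> L) (i0 : 'I_n) : F i0 != 0 ->
  (forall j, j != i0 -> F j != 0 -> ltof le (v (F i0)) (v (F j))) ->
  \sum_j F j != 0 /\ v (\sum_j F j) = v (F i0).
Proof.
move=> F0 hF; rewrite (bigD1 i0) //=.
set S := \sum_(j | j != i0) F j.
have [->|S0] := eqVneq S 0; first by rewrite addr0.
have [j [Pj Fj hj]] := val_sum_ultra S0.
exact/val_strict/(oag_lt_le_trans val_oag (hF j Pj Fj) hj).
Qed.

End Valuation.

Section Balls.
Variables (L : fieldType) (Γ : zmodType) (le : Γ -> Γ -> Prop) (v : L -> Γ).
Variable d : cut Γ.
Hypotheses (hv : is_valuation le v) (Hd : is_cut le d).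

Local Notation ball := (ball le v).

Lemma ball_center a : ball a d a. Proof. by left. Qed.

Lemma ballP a c : c != a -> ball a d c <-> cutR d (v (c - a)).
Proof.
move=> ca; split; last by move=> hr; right => l hl; apply: (cut_lt Hd hl hr).
case=> [e|h]; first by move: ca; rewrite e eqxx.
by case: (cut_cover Hd (v (c - a))) => // /h [].
Qed.

Lemma ballNP a c : ~ ball a d c -> c != a /\ cutL d (v (c - a)).
Proof.
move=> nb; have ca : c != a by apply/eqP => e; apply: nb; rewrite e; apply: ball_center.
by split => //; case: (cut_cover Hd (v (c - a))) => // /(ballP ca).
Qed.

Lemma ball_sym a b : ball a d b -> ball b d a.
Proof.
have [-> //|ba] := eqVneq b a; have ab : a != b by rewrite eq_sym.
by rewrite (ballP ba) (ballP ab) (val_distC hv).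
Qed.

Lemma ball_trans a b c : ball a d b -> ball b d c -> ball a d c.
Proof.
have [-> _ _|ca] := eqVneq c a; first exact: ball_center.
have [-> //|ba] := eqVneq b a; have [-> //|cb] := eqVneq c b.
rewrite (ballP ba) (ballP cb) (ballP ca) => hb hc.
have c0 : c - b != 0 by rewrite subr_eq0.
have b0 : b - a != 0 by rewrite subr_eq0.
have s0 : (c - b) + (b - a) != 0 by rewrite addrA subrK subr_eq0.
have -> : c - a = (c - b) + (b - a) by rewrite addrA subrK.
by case: (val_ultra hv c0 b0 s0) => [/(cutR_ge (val_oag hv) Hd hc)|/(cutR_ge (val_oag hv) Hd hb)].
Qed.

Lemma ball_recenter a b : ball a d b -> forall c, ball a d c <-> ball b d c.
Proof.
move=> hb c; split; last exact: ball_trans.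
by apply: ball_trans; apply: ball_sym.
Qed.

Lemma val_sub_out a b c : ball a d b -> ~ ball a d c -> v (c - b) = v (c - a).
Proof.
move=> hb /ballNP [ca hl]; have [-> //|ba] := eqVneq b a.
have hbr := iffLR (ballP ba) hb.
have c0 : c - a != 0 by rewrite subr_eq0.
have ab0 : a - b != 0 by rewrite subr_eq0 eq_sym.
have lt : ltof le (v (c - a)) (v (a - b)).
  by rewrite [v (a - b)](val_distC hv); exact: (cut_lt Hd hl hbr).
by have [_ <-] := val_strict hv c0 ab0 lt; rewrite addrA subrK.
Qed.

End Balls.

Lemma value_group_divisible (L : closedFieldType) (Γ : zmodType)
    (le : Γ -> Γ -> Prop) (v : L -> Γ) : is_valuation le v -> divisible Γ.
Proof.
move=> hv n b n0; have [x [x0 <-]] := val_surj hv b.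
have : size ('X^n - x%:P) != 1 by rewrite size_XnsubC // eqSS -lt0n.
move/closed_rootP => [y]; rewrite rootE !hornerE subr_eq0 => /eqP ey.
have y0 : y != 0 by apply: contraNneq x0 => y0; rewrite -ey y0 expr0n eqn0Ngt n0.
by exists (v y); rewrite -(valX hv _ y0) ey.
Qed.

Lemma ex_minimal (T : eqType) (R : T -> T -> Prop) :
    (forall x, R x x) -> (forall x y z, R x y -> R y z -> R x z) ->
    (forall x y, R x y \/ R y x) ->
  forall (x0 : T) (s : seq T),
  exists2 x, x \in x0 :: s & forall y, y \in x0 :: s -> R x y.
Proof.
move=> Rrefl Rtrans Rtotal x0 s; elim: s x0 => [|x1 s IH] x0.
  by exists x0 => [|y]; rewrite ?mem_head // inE => /eqP ->.
have [x xs xmin] := IH x1.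
case: (Rtotal x0 x) => h.
  by exists x0 => [|y]; rewrite ?mem_head // in_cons => /predU1P [->|/xmin/(Rtrans _ _ _ h)].
by exists x => [|y]; rewrite in_cons ?xs ?orbT // => /predU1P [->|/xmin].
Qed.

Definition min_term (L : fieldType) (Γ : zmodType) (le : Γ -> Γ -> Prop)
    (v : L -> Γ) (d : cut Γ) (g : {poly L}) (p : int * Γ) : Prop :=
  (exists2 n : nat, (n < size g)%N /\ g`_n != 0 & p = (n%:Z, v g`_n)) /\
  (forall m : nat, (m < size g)%N -> g`_m != 0 -> cut_le le d p (m%:Z, v g`_m)).

Section MinTerm.
Variables (L : fieldType) (Γ : zmodType) (le : Γ -> Γ -> Prop) (v : L -> Γ).
Variable (d : cut Γ).
Hypotheses (hv : is_valuation le v) (Hd : is_cut le d) (Hdiv : divisible Γ).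

Local Notation cle := (cut_le le d).
Local Notation term g n := (n%:Z, v g`_n).
Let Hle := val_oag hv.
Let Od := cut_le_oag Hle Hd Hdiv.

Definition min_index (g : {poly L}) (n : nat) : Prop :=
  g`_n != 0 /\ forall m, g`_m != 0 -> cle (term g n) (term g m).

Lemma min_termP g p : min_term le v d g p <-> exists2 n, min_index g n & p = term g n.
Proof.
split=> [[[n [_ gn] ->] hmin]|[n [gn hmin] ->]].
  by exists n => //; split => // m gm; apply: hmin => //; apply: ltn_size_coef.
by split=> [|m _ /hmin //]; exists n => //; split => //; apply: ltn_size_coef.
Qed.

Lemma min_index_exists g : g != 0 -> exists n, min_index g n.
Proof.
move=> g0; have : (size g).-1 \in [seq n <- iota 0 (size g) | g`_n != 0].
  rewrite mem_filter -lead_coefE lead_coef_eq0 g0 mem_iota add0n.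
  by rewrite /= ltn_predL size_poly_gt0.
case E: [seq n <- iota 0 (size g) | g`_n != 0] => [|n0 s] // _.
have [n + nmin] := @ex_minimal _ (fun n m => cle (term g n) (term g m))
  (fun n => oag_refl Od _) (fun n m k => @oag_trans _ _ Od _ _ _)
  (fun n m => oag_total Od _ _) n0 s.
rewrite -E mem_filter => /andP [gn _]; exists n; split => // m gm.
by apply: nmin; rewrite -E mem_filter gm mem_iota /= ltn_size_coef.
Qed.

Lemma min_index_lt g n m : min_index g n -> m != n -> g`_m != 0 ->
  ltof cle (term g n) (term g m).
Proof.
move=> [_ hmin] mn gm; split; first exact: hmin.
by move=> /(congr1 fst) /= /eqP; rewrite eqz_nat eq_sym (negbTE mn).
Qed.

Lemma min_term_exists g : g != 0 -> exists p, min_term le v d g p.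
Proof. by move=> /min_index_exists [n hn]; exists (term g n); apply/min_termP; exists n. Qed.

Lemma min_term_uniq g p q : min_term le v d g p -> min_term le v d g q -> p = q.
Proof.
move=> /min_termP [n [gn hn] ->] /min_termP [m [gm hm] ->].
by apply: (oag_anti Od); [apply: hn | apply: hm].
Qed.

Section MinIndexMul.
Variables (F G : {poly L}) (i j : nat).
Hypotheses (hF : min_index F i) (hG : min_index G j).

Lemma pair_termM k l : F`_k != 0 -> G`_l != 0 ->
  term F k + term G l = ((k + l)%:Z, v (F`_k * G`_l)).
Proof. by move=> Fk Gl; rewrite (valM hv). Qed.

(** Every other product [F_k G_(i+j-k)] is strictly above [F_i G_j], since the
    minimum of [F] is attained at [k = i] only. *)
Lemma min_indexM_coef :
  (F * G)`_(i + j) != 0 /\ v (F * G)`_(i + j) = v (F`_i * G`_j).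
Proof.
have [Fi0 _] := hF; have [Gj0 _] := hG.
have iS : (i < (i + j).+1)%N by rewrite ltnS leq_addr.
have := val_sum_strict hv (F := fun k : 'I_(i + j).+1 => F`_k * G`_(i + j - k))
  (i0 := Ordinal iS).
rewrite coefM /= addKn; apply; first by rewrite mulf_neq0.
move=> k ki.
rewrite mulf_eq0 negb_or => /andP [Fk Gk].
have kn : (k <= i + j)%N by rewrite -ltnS ltn_ord.
have := oag_ltD Od (min_index_lt hF ki Fk) (proj2 hG _ Gk).
by rewrite !pair_termM // subnKC // => /(cut_lt_snd _ Hle).
Qed.

Lemma min_indexM : min_index (F * G) (i + j).
Proof.
have [Fi0 _] := hF; have [Gj0 _] := hG.
have [FG0 vFG] := min_indexM_coef; split => // m; rewrite coefM => FGm.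
have [k [_ tk hk]] := val_sum_ultra hv FGm.
move: tk; rewrite mulf_eq0 negb_or => /andP [Fk Gk].
have km : (k <= m)%N by rewrite -ltnS ltn_ord.
have -> : term (F * G) (i + j) = term F i + term G j by rewrite pair_termM // vFG.
apply: (oag_trans Od (oag_leD Od (proj2 hF _ Fk) (proj2 hG _ Gk))).
by rewrite pair_termM // subnKC //; apply/(cut_le_snd _ Hle).
Qed.

End MinIndexMul.
End MinTerm.

Lemma coef_XaddC (R : nzRingType) (e : R) m :
  ('X + e%:P)`_m = if m == 0%N then e else if m == 1%N then 1 else 0.
Proof. by rewrite coefD coefX coefC; case: m => [|[|m]] /=; rewrite ?add0r ?addr0. Qed.

Section Omega.
Variables (L : fieldType) (Γ : zmodType) (le : Γ -> Γ -> Prop) (v : L -> Γ).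
Variables (a : L) (d : cut Γ).
Hypotheses (hv : is_valuation le v) (Hd : is_cut le d) (Hdiv : divisible Γ).

Local Notation omega := (omega_fun le v a d).
Local Notation shift f := (f \Po ('X + a%:P)).
Let Hle := val_oag hv.
Let Od := cut_le_oag Hle Hd Hdiv.

Lemma omega_spec f : f != 0 -> min_term le v d (shift f) (omega f).
Proof.
move=> f0; apply: epsilon_spec; apply: min_term_exists => //.
by rewrite comp_poly_eq0 // size_XaddC.
Qed.

Lemma omega_min f n : f != 0 -> min_index le v d (shift f) n ->
  omega f = (n%:Z, v (shift f)`_n).
Proof.
move=> f0 hn; apply: min_term_uniq (omega_spec f0) _ => //.
by apply/min_termP; exists n.
Qed.

Lemma omegaP f : f != 0 ->
  exists2 n, min_index le v d (shift f) n & omega f = (n%:Z, v (shift f)`_n).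
Proof. by move/omega_spec/min_termP. Qed.

Lemma omegaC c : c != 0 -> omega c%:P = (0, v c).
Proof.
move=> c0; rewrite (@omega_min _ 0) ?polyC_eq0 // comp_polyC ?coefC //.
by split=> [|[|m]]; rewrite coefC ?eqxx //= => _; apply: (oag_refl Od).
Qed.

Lemma omegaM f h : f != 0 -> h != 0 -> omega (f * h) = omega f + omega h.
Proof.
move=> f0 h0; have [i hi ->] := omegaP f0; have [j hj ->] := omegaP h0.
have [Fi0 _] := hi; have [Gj0 _] := hj.
rewrite (pair_termM hv) // -(proj2 (min_indexM_coef hv Hd Hdiv hi hj)) -comp_polyM.
by apply: omega_min; [rewrite mulf_neq0 | rewrite comp_polyM; apply: min_indexM].
Qed.

Lemma omega_ultra f h : f != 0 -> h != 0 -> f + h != 0 ->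
  cut_le le d (omega f) (omega (f + h)) \/ cut_le le d (omega h) (omega (f + h)).
Proof.
move=> f0 h0 fh0; have [n [+ _] ->] := omegaP fh0.
have [i [_ hi] ->] := omegaP f0; have [j [_ hj] ->] := omegaP h0.
rewrite comp_polyD coefD.
have [->|Fn] := eqVneq (shift f)`_n 0; first by rewrite add0r => Gn; right; apply: hj.
have [->|Gn] := eqVneq (shift h)`_n 0; first by rewrite addr0 => _; left; apply: hi.
move=> FGn; case: (val_ultra hv Fn Gn FGn) => hle; [left|right];
  apply: (oag_trans Od (_ : cut_le le d _ (n%:Z, _)));
  by [apply: hi | apply: hj | apply/(cut_le_snd _ Hle)].
Qed.

Lemma shift_Xsub c : shift ('X - c%:P) = 'X + (a - c)%:P.
Proof. by rewrite comp_polyB comp_polyX comp_polyC polyCB addrA. Qed.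

Lemma omega_Xsub_in c : ball le v a d c -> omega ('X - c%:P) = (1, 0).
Proof.
move=> hc; have Xmin : min_index le v d (shift ('X - c%:P)) 1.
  rewrite shift_Xsub; split=> [|[|[|m]]]; rewrite !coef_XaddC ?oner_neq0 ?eqxx //= (val1 hv).
    move=> ac; have ca : c != a by rewrite eq_sym -subr_eq0.
    by rewrite (val_distC hv); apply/(cut_le_x_const Hle Hd)/(ballP v Hd ca).
  by move=> _; apply: (oag_refl Od).
by rewrite (omega_min _ Xmin) ?polyXsubC_eq0 // shift_Xsub coef_XaddC (val1 hv).
Qed.

Lemma omega_Xsub_out c : ~ ball le v a d c -> omega ('X - c%:P) = (0, v (c - a)).
Proof.
move=> /(ballNP Hd) [ca hl].
have ac0 : a - c != 0 by rewrite subr_eq0 eq_sym.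
have Xmin : min_index le v d (shift ('X - c%:P)) 0.
  rewrite shift_Xsub; split=> [|[|[|m]]]; rewrite !coef_XaddC //= ?eqxx //= => _.
    exact: (oag_refl Od).
  by rewrite (val1 hv) (val_distC hv); apply/(cut_le_const_x Hle Hd).
by rewrite (omega_min _ Xmin) ?polyXsubC_eq0 // shift_Xsub coef_XaddC (val_distC hv).
Qed.

End Omega.

Lemma closed_poly_ind (L : closedFieldType) (P : {poly L} -> Prop) :
  (forall c, c != 0 -> P c%:P) -> (forall c, P ('X - c%:P)) ->
  (forall f g, f != 0 -> g != 0 -> P f -> P g -> P (f * g)) ->
  forall f, f != 0 -> P f.
Proof.
move=> hC hX hM f f0; have [r Er] := closed_field_poly_normal f.
have lc0 : lead_coef f != 0 by rewrite lead_coef_eq0.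
have [prod0 Pprod] : \prod_(z <- r) ('X - z%:P) != 0 /\ P (\prod_(z <- r) ('X - z%:P)).
  elim: r {Er} => [|z r [IH0 IH]].
    by rewrite big_nil -polyC1 polyC_eq0 oner_neq0; split => //; apply/hC/oner_neq0.
  by rewrite big_cons mulf_neq0 ?polyXsubC_eq0 //; split => //; apply: hM; rewrite ?polyXsubC_eq0.
by rewrite Er -mul_polyC; apply: hM; rewrite ?polyC_eq0 //; apply: hC.
Qed.

Section BallOmega.
Variables (L : closedFieldType) (Γ : zmodType) (le : Γ -> Γ -> Prop) (v : L -> Γ).
Hypothesis hv : is_valuation le v.

Let Hle := val_oag hv.
Let Hdiv := value_group_divisible hv.
Local Notation omega := (omega_fun le v).
Local Notation ball := (ball le v).

Lemma omegaB_ext_val a d : is_cut le d -> is_ext_val le v (omegaB le v a d).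
Proof.
move=> Hd; split; first exact: (cut_le_oag Hle Hd Hdiv).
split=> //=.
- exact: (cut_le_snd _ Hle).
- by move=> c; apply: omegaC.
- by move=> f g; apply: omegaM.
- by move=> f g; apply: omega_ultra.
Qed.

Lemma omega1 a d : is_cut le d -> omega a d 1 = 0.
Proof. by move=> Hd; rewrite -polyC1 (omegaC a hv Hd Hdiv) ?oner_neq0 ?(val1 hv). Qed.

Lemma omegaB_vt a d : is_cut le d -> value_transcendental (omegaB le v a d).
Proof.
move=> Hd; exists (1, 0); split.
  exists ('X - a%:P), 1; split; rewrite ?polyXsubC_eq0 ?oner_neq0 //=.
  by rewrite (omega_Xsub_in hv Hd Hdiv (ball_center _ _ _ _)) omega1 ?subr0.
move=> n n0 c /(congr1 fst) /=.
suff -> : ((1, 0) *+ n : int * Γ).1 = n%:Z by move/eqP; rewrite eqz_nat; case: n n0.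
by elim: n {n0} => // n IH; rewrite mulrS /= IH -addn1 PoszD addrC.
Qed.

Lemma ball_subP {a d b e} : is_cut le d -> is_cut le e ->
  (forall c, ball b e c -> ball a d c) <->
  ball a d b /\ (forall g, cutR e g -> cutR d g).
Proof.
move=> Hd He; split=> [hs|[hb hR] c hc].
  split=> [|g hg]; first exact/hs/ball_center.
  have [x [x0 vx]] := val_surj hv g.
  have Ebx : b + x - b = x by rewrite addrC addKr.
  have bx : b + x != b by rewrite -subr_eq0 Ebx.
  have : ball b d (b + x).
    apply/(ball_recenter hv Hd (hs _ (ball_center _ _ _ _))); apply: hs.
    by apply/(ballP v He bx); rewrite Ebx vx.
  by move/(ballP v Hd bx); rewrite Ebx vx.
have [-> //|cb] := eqVneq c b.
apply/(ball_recenter hv Hd hb); apply/(ballP v Hd cb).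
exact/hR/(ballP v He cb).
Qed.

Lemma omega_ball_eq {a d b e} : is_cut le d -> is_cut le e ->
  (forall c, ball a d c <-> ball b e c) ->
  forall f, f != 0 -> omega a d f = omega b e f.
Proof.
move=> Hd He hbe; apply: closed_poly_ind.
- by move=> c c0; rewrite (omegaC a hv Hd Hdiv c0) (omegaC b hv He Hdiv c0).
- move=> c; have [hc|hc] := classic (ball a d c).
    by rewrite (omega_Xsub_in hv Hd Hdiv hc) (omega_Xsub_in hv He Hdiv (iffLR (hbe c) hc)).
  have hc' : ~ ball b e c by move/hbe.
  rewrite (omega_Xsub_out hv Hd Hdiv hc) (omega_Xsub_out hv He Hdiv hc').
  by rewrite (val_sub_out hv Hd (iffRL (hbe b) (ball_center _ _ _ _)) hc).
- move=> f g f0 g0 ef eg.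
  by rewrite (omegaM a hv Hd Hdiv f0 g0) (omegaM b hv He Hdiv f0 g0) ef eg.
Qed.

Lemma omegaB_equiv_of_ball_eq {a d b e} : is_cut le d -> is_cut le e ->
  (forall c, ball a d c <-> ball b e c) ->
  val_equiv (omegaB le v a d) (omegaB le v b e).
Proof.
move=> Hd He hbe; have Eom := omega_ball_eq Hd He hbe.
have [_ hRed] := iffLR (ball_subP Hd He) (fun c => iffRL (hbe c)).
have [_ hRde] := iffLR (ball_subP He Hd) (fun c => iffLR (hbe c)).
exists id; split => //=.
- by move=> x [f [h [f0 h0 ->]]]; exists f, h; split => //=; rewrite !Eom.
- by move=> x y _ _; apply: cut_le_eq => // g; split; [apply: hRde | apply: hRed].
- move=> x [f [h [f0 h0 Ex]]]; exists x => //.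
  by exists f, h; split => //; rewrite Ex /= !Eom.
- by move=> f f0; rewrite /= Eom.
Qed.

Lemma in_vgroup_omega a d f : is_cut le d -> f != 0 ->
  in_vgroup (omegaB le v a d) (omega a d f).
Proof. by move=> Hd f0; exists f, 1; split; rewrite ?oner_neq0 //= omega1 ?subr0. Qed.

Lemma in_vgroup_const a d g : is_cut le d -> in_vgroup (omegaB le v a d) (0, g).
Proof.
move=> Hd; have [x [x0 <-]] := val_surj hv g.
by rewrite -(omegaC a hv Hd Hdiv x0); apply: in_vgroup_omega; rewrite ?polyC_eq0.
Qed.

Lemma ball_eq_of_omegaB_equiv {a d b e} : is_cut le d -> is_cut le e ->
  val_equiv (omegaB le v a d) (omegaB le v b e) ->
  forall c, ball a d c <-> ball b e c.
Proof.
move=> Hd He [iota [_ _ iota_le _ iota_w]].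
have Od := cut_le_oag Hle Hd Hdiv; have Oe := cut_le_oag Hle He Hdiv.
have X0 (c : L) : 'X - c%:P != 0 by rewrite polyXsubC_eq0.
have iota_const g : iota (0, g) = (0, g).
  have [x [x0 <-]] := val_surj hv g; have xP0 : x%:P != 0 by rewrite polyC_eq0.
  by have /= := iota_w _ xP0; rewrite (omegaC a hv Hd Hdiv x0) (omegaC b hv He Hdiv x0).
have iota_inj p q : in_vgroup (omegaB le v a d) p -> in_vgroup (omegaB le v a d) q ->
    iota p = iota q -> p = q.
  move=> hp hq E; apply: (oag_anti Od); apply/(iota_le _ _ _ _) => //=; rewrite E;
    exact: (oag_refl Oe).
move=> c; split=> hc; apply: NNPP => hn; have /= := iota_w _ (X0 c).
- rewrite (omega_Xsub_in hv Hd Hdiv hc) (omega_Xsub_out hv He Hdiv hn) -iota_const.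
  have := in_vgroup_omega a Hd (X0 c); rewrite (omega_Xsub_in hv Hd Hdiv hc) => h1.
  by move/(iota_inj _ _ (in_vgroup_const a _ Hd) h1)/(congr1 fst).
- rewrite (omega_Xsub_in hv He Hdiv hc) (omega_Xsub_out hv Hd Hdiv hn) iota_const.
  by move/(congr1 fst).
Qed.

Lemma ball_sub_gap {a d b e} : is_cut le d -> is_cut le e ->
  (forall c, ball b e c -> ball a d c) -> ~ (forall c, ball a d c -> ball b e c) ->
  exists g, cutR d g /\ cutL e g.
Proof.
move=> Hd He /(ball_subP Hd He) [hb _] hns; apply: NNPP => hng; apply: hns.
have hRde g : cutR d g -> cutR e g.
  by move=> hg; apply: NNPP => hn; apply: hng; exists g; split => //; apply/(cutLNR He).
apply/(ball_subP He Hd); split => //.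
have [->|ab] := eqVneq a b; first exact: ball_center.
have ba : b != a by rewrite eq_sym.
by apply/(ballP v He ab)/hRde; rewrite (val_distC hv); apply/(ballP v Hd ba).
Qed.

Definition omega_separated a d b e : Prop :=
  forall f, f != 0 -> exists c,
    cut_le le d (omega a d f) (0, c) /\ cut_le le e (0, c) (omega b e f).

(** For [x - c] with [c ∈ C] the separating value is a point of the gap
    between [δ] and [ε]; otherwise it is [v(c - b)]. *)
Lemma omega_separated_of_gap {a d b e g} : is_cut le d -> is_cut le e ->
  (forall c, ball b e c -> ball a d c) -> cutR d g -> cutL e g ->
  omega_separated a d b e.
Proof.
move=> Hd He hs hgd hge; have [hb _] := iffLR (ball_subP Hd He) hs.
have Od := cut_le_oag Hle Hd Hdiv; have Oe := cut_le_oag Hle He Hdiv.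
apply: closed_poly_ind.
- move=> c c0; exists (v c); rewrite (omegaC a hv Hd Hdiv c0) (omegaC b hv He Hdiv c0).
  by split; apply: oag_refl.
- move=> c; have [hc|hc] := classic (ball b e c).
    exists g; rewrite (omega_Xsub_in hv Hd Hdiv (hs _ hc)) (omega_Xsub_in hv He Hdiv hc).
    by split; [apply/(cut_le_x_const Hle Hd) | apply/(cut_le_const_x Hle He)].
  rewrite (omega_Xsub_out hv He Hdiv hc); have [hca|hca] := classic (ball a d c).
    exists (v (c - b)); rewrite (omega_Xsub_in hv Hd Hdiv hca); split; last exact: oag_refl.
    have [cb _] := ballNP He hc.
    by apply/(cut_le_x_const Hle Hd)/(ballP v Hd cb)/(ball_recenter hv Hd hb).
  exists (v (c - a)); rewrite (omega_Xsub_out hv Hd Hdiv hca) (val_sub_out hv Hd hb hca).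
  by split; apply: oag_refl.
- move=> f h f0 h0 [c1 [h1 h2]] [c2 [h3 h4]]; exists (c1 + c2).
  rewrite (omegaM a hv Hd Hdiv f0 h0) (omegaM b hv He Hdiv f0 h0).
  have -> : ((0, c1 + c2) : int * Γ) = (0, c1) + (0, c2) by [].
  by split; apply: oag_leD.
Qed.

Lemma ball_sub_of_omega_separated {a d b e} : is_cut le d -> is_cut le e ->
  omega_separated a d b e -> forall c, ball b e c -> ball a d c.
Proof.
move=> Hd He hsep.
have [g [h1 h2]] := hsep _ (negbT (polyXsubC_eq0 a)).
rewrite (omega_Xsub_in hv Hd Hdiv (ball_center _ _ _ _)) in h1.
move/(cut_le_x_const Hle Hd): h1 => hgd.
have [hge gab] : cutL e g /\ (a != b -> le g (v (a - b))).
  have [ha|ha] := classic (ball b e a).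
    rewrite (omega_Xsub_in hv He Hdiv ha) in h2; move/(cut_le_const_x Hle He): h2 => hge.
    by split=> // ab; case: (cut_lt He hge (iffLR (ballP v He ab) ha)).
  rewrite (omega_Xsub_out hv He Hdiv ha) in h2; move/(cut_le_snd _ Hle): h2 => gl.
  by have [_ hl] := ballNP He ha; split=> [|_ //]; apply: (cutL_le Hle He hl gl).
apply/(ball_subP Hd He); split=> [|r hr]; last first.
  by apply: (cutR_ge Hle Hd hgd); case: (cut_lt He hge hr).
have [->|ba] := eqVneq b a; first exact: ball_center.
apply/(ballP v Hd ba); rewrite (val_distC hv); apply: (cutR_ge Hle Hd hgd).
by apply: gab; rewrite eq_sym.
Qed.

Lemma ball_sub_iff_omegaB_le {a d b e} : is_cut le d -> is_cut le e ->
  (forall c, ball b e c -> ball a d c) <-> val_le (omegaB le v a d) (omegaB le v b e).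
Proof.
move=> Hd He; split=> [hs|[heq c|hsep]].
- have [hs'|hns] := classic (forall c, ball a d c -> ball b e c).
    by left; apply: omegaB_equiv_of_ball_eq => // c; split; [apply: hs' | apply: hs].
  have [g [hgd hge]] := ball_sub_gap Hd He hs hns.
  by right; apply: (omega_separated_of_gap Hd He hs hgd hge).
- exact: (iffRL (ball_eq_of_omegaB_equiv Hd He heq c)).
- exact: (ball_sub_of_omega_separated Hd He hsep).
Qed.

End BallOmega.

Section Surjectivity.
Variables (L : closedFieldType) (Γ : zmodType) (le : Γ -> Γ -> Prop) (v : L -> Γ).
Variable w : pvaluation L Γ.
Hypotheses (hv : is_valuation le v) (hw : is_ext_val le v w).

Local Notation lew := (@pv_le L Γ w).
Local Notation emb := (@pv_emb L Γ w).
Local Notation wf := (@pv_fun L Γ w).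
Let Hle := val_oag hv.
Let Hdiv := value_group_divisible hv.

Lemma w_oag : is_oag lew. Proof. by case: hw. Qed.
Lemma embD x y : emb (x + y) = emb x + emb y.
Proof. by case: hw => _ [h _ _ _ _]; apply: h. Qed.
Lemma emb_le x y : lew (emb x) (emb y) <-> le x y.
Proof. by case: hw => _ [_ h _ _ _]; apply: h. Qed.
Lemma wC c : c != 0 -> wf c%:P = emb (v c).
Proof. by case: hw => _ [_ _ h _ _]; apply: h. Qed.
Lemma wM f g : f != 0 -> g != 0 -> wf (f * g) = wf f + wf g.
Proof. by case: hw => _ [_ _ _ h _]; apply: h. Qed.
Lemma w_ultra f g : f != 0 -> g != 0 -> f + g != 0 ->
  lew (wf f) (wf (f + g)) \/ lew (wf g) (wf (f + g)).
Proof. by case: hw => _ [_ _ _ _ h]; apply: h. Qed.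

Lemma emb0 : emb 0 = 0.
Proof. by apply: (@addrI _ (emb 0)); rewrite -embD !addr0. Qed.

Lemma embN x : emb (- x) = - emb x.
Proof. by apply: (@addrI _ (emb x)); rewrite -embD !subrr emb0. Qed.

Lemma embMn x n : emb (x *+ n) = emb x *+ n.
Proof. by elim: n => [|n IH]; rewrite ?mulr0n ?emb0 // !mulrS embD IH. Qed.

Lemma embMz x k : emb (x *~ k) = emb x *~ k.
Proof.
case: k => n; first by rewrite -!pmulrn embMn.
by rewrite NegzE !mulrNz embN -!pmulrn embMn.
Qed.

Lemma emb_inj x y : emb x = emb y -> x = y.
Proof. by move=> E; apply: (oag_anti Hle); apply/emb_le; rewrite E; apply: (oag_refl w_oag). Qed.

Lemma wN f : f != 0 -> wf (- f) = wf f.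
Proof.
move=> f0; have n1P : (-1 : L)%:P != 0 by rewrite polyC_eq0 oppr_eq0 oner_neq0.
rewrite -mulN1r -polyC1 -polyCN wM // wC ?oppr_eq0 ?oner_neq0 //.
by rewrite (valN1 hv) emb0 add0r.
Qed.

Lemma w_strict f g : f != 0 -> g != 0 -> ltof lew (wf f) (wf g) ->
  f + g != 0 /\ wf (f + g) = wf f.
Proof. exact: (ultra_strict w_oag wN w_ultra). Qed.

Definition torsion_over_Γ (x : pv_G w) : Prop :=
  exists2 n, (0 < n)%N & exists g, x *+ n = emb g.

Lemma torsion_over_ΓB x y : torsion_over_Γ x -> torsion_over_Γ y -> torsion_over_Γ (x - y).
Proof.
move=> [n n0 [g Eg]] [m m0 [h Eh]]; exists (n * m)%N; first by rewrite muln_gt0 n0.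
exists (g *+ m - h *+ n); rewrite mulrnBl embD embN !embMn -Eg -Eh -!mulrnA.
by rewrite mulnC.
Qed.

Lemma torsion_over_ΓD x y : torsion_over_Γ x -> torsion_over_Γ y -> torsion_over_Γ (x + y).
Proof.
move=> [n n0 [g Eg]] [m m0 [h Eh]]; exists (n * m)%N; first by rewrite muln_gt0 n0.
exists (g *+ m + h *+ n); rewrite mulrnDl embD !embMn -Eg -Eh -!mulrnA.
by rewrite mulnC.
Qed.

(** Over an algebraically closed field the values of the linear polynomials
    generate the value group of [w], so one of them is non-torsion over [Γ]. *)
Lemma exists_transcendental_center :
  value_transcendental w -> exists a, ~ torsion_over_Γ (wf ('X - a%:P)).
Proof.
move=> [x [[f [h [f0 h0 ->]]] hx]]; apply: NNPP => hall.
have htor : forall f, f != 0 -> torsion_over_Γ (wf f).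
  apply: closed_poly_ind.
  - by move=> c c0; exists 1%N => //; exists (v c); rewrite wC.
  - by move=> c; apply: NNPP => hc; apply: hall; exists c.
  - by move=> g1 g2 g10 g20 t1 t2; rewrite wM //; apply: torsion_over_ΓD.
have [n n0 [g Eg]] := torsion_over_ΓB (htor f f0) (htor h h0).
exact: hx n n0 g Eg.
Qed.

Section Center.
Variable a : L.
Hypothesis ha : ~ torsion_over_Γ (wf ('X - a%:P)).

Local Notation t := (wf ('X - a%:P)).

Definition w_cut : cut Γ :=
  Cut (fun g => ltof lew (emb g) t) (fun g => ltof lew t (emb g)).

Definition w_embed (p : int * Γ) : pv_G w := t *~ p.1 + emb p.2.

Lemma w_neq_emb g : t <> emb g.
Proof. by move=> E; apply: ha; exists 1%N => //; exists g. Qed.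

Lemma w_cut_is_cut : is_cut le w_cut.
Proof.
split=> [l r [hl1 hl2] [hr1 hr2] /=|g /=].
  have lr : lew (emb l) (emb r) := oag_trans w_oag hl1 hr1.
  split; first exact/emb_le.
  by move=> e; subst r; apply: hl2; apply: (oag_anti w_oag hl1 hr1).
by case: (oag_total w_oag (emb g) t) => h; [left|right]; split => // E;
  first [exact: w_neq_emb (esym E) | exact: w_neq_emb E].
Qed.

Lemma w_embedD p q : w_embed (p + q) = w_embed p + w_embed q.
Proof. by case: p q => [k1 b1] [k2 b2]; rewrite /w_embed /= mulrzDr embD addrACA. Qed.

Lemma w_embedB p q : w_embed (p - q) = w_embed p - w_embed q.
Proof. by case: p q => [k1 b1] [k2 b2]; rewrite /w_embed /= mulrzBr embD embN opprD addrACA. Qed.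

Lemma w_omegaE f : f != 0 -> wf f = w_embed (omega_fun le v a w_cut f).
Proof.
have Hd := w_cut_is_cut; move: f; apply: closed_poly_ind.
- by move=> c c0; rewrite (omegaC a hv Hd Hdiv c0) wC // /w_embed /= mulr0z add0r.
- move=> c; have ac_eq c' : c' != a -> (a - c')%:P != 0 /\ wf (a - c')%:P = emb (v (c' - a)).
    move=> ca; have ac0 : a - c' != 0 by rewrite subr_eq0 eq_sym.
    by rewrite polyC_eq0 wC // (val_distC hv).
  have X0 : 'X - a%:P != 0 by rewrite polyXsubC_eq0.
  have [hc|hc] := classic (ball le v a w_cut c).
    rewrite (omega_Xsub_in hv Hd Hdiv hc) /w_embed /= emb0 addr0 mulr1z.
    have [-> //|ca] := eqVneq c a; have [ac0 Ew] := ac_eq c ca.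
    have lt : ltof lew t (wf (a - c)%:P) by rewrite Ew; apply/(ballP v Hd ca).
    by have [_ <-] := w_strict X0 ac0 lt; rewrite polyCB addrA subrK.
  have [ca _] := ballNP Hd hc; have [ac0 Ew] := ac_eq c ca.
  rewrite (omega_Xsub_out hv Hd Hdiv hc) /w_embed /= mulr0z add0r -Ew.
  have lt : ltof lew (wf (a - c)%:P) t by rewrite Ew; have [_ hl] := ballNP Hd hc.
  have -> : 'X - c%:P = (a - c)%:P + ('X - a%:P) by rewrite [RHS]addrC polyCB addrA subrK.
  by have [_ ->] := w_strict ac0 X0 lt.
- by move=> f g f0 g0 ef eg; rewrite wM // (omegaM a hv Hd Hdiv f0 g0) w_embedD ef eg.
Qed.

Lemma w_mulz_emb k g : t *~ k = emb g -> k = 0.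
Proof.
wlog kp : k g / 0 <= k.
  move=> wlog_kp E; have [kp|kn] := lerP 0 k; first exact: wlog_kp kp E.
  apply/eqP; rewrite -oppr_eq0; apply/eqP; apply: (wlog_kp _ (- g)).
    by rewrite oppr_ge0 ltW.
  by rewrite mulrNz E embN.
case: k kp => [[|n]|//] // _ E; exfalso; apply: ha.
by exists n.+1 => //; exists g; rewrite pmulrn.
Qed.

Lemma cut_npos_embed_le k b : cut_npos le w_cut k b -> lew (t *~ k + emb b) 0.
Proof.
case: (ltrgtP k 0) => [kn|kp|->].
- move/(cut_nposN _ _ _ kn) => [l [[hl _] hb]].
  have h1 : lew (emb b) (t *~ (- k)).
    apply: (oag_trans w_oag (iffRL (emb_le _ _) hb)); rewrite embMz.
    by apply: (oag_lerMz w_oag) => //; rewrite oppr_ge0 ltW.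
  by have := oag_leDl w_oag (t *~ k) h1; rewrite mulrNz subrr.
- move/(cut_nposP _ _ _ kp) => [r [[hr _] hb]].
  have h1 : lew (t *~ k) (emb (r *~ k)).
    by rewrite embMz; apply: (oag_lerMz w_oag) => //; apply: ltW.
  apply: (oag_trans w_oag (oag_leDr w_oag (emb b) h1)).
  by rewrite -embD -emb0; apply/emb_le.
- by move/cut_npos0 => hb; rewrite mulr0z add0r -emb0; apply/emb_le.
Qed.

(** The converse needs [t] to be non-torsion over [Γ]: otherwise [k t + b]
    could vanish with [k != 0]. *)
Lemma cut_npos_embed k b : cut_npos le w_cut k b <-> lew (t *~ k + emb b) 0.
Proof.
split=> [|h]; first exact: cut_npos_embed_le.
case: (cut_npos_total Hle w_cut_is_cut Hdiv k b) => // /cut_npos_embed_le.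
rewrite mulrNz embN -opprD => /(oag_leN w_oag); rewrite opprK oppr0 => h'.
have Et : t *~ k = emb (- b).
  by apply/eqP; rewrite embN -addr_eq0 (oag_anti w_oag h h').
have k0 := w_mulz_emb Et.
have b0 : b = 0.
  by apply: emb_inj; apply: oppr_inj; rewrite emb0 oppr0 -embN -Et k0 mulr0z.
by rewrite k0 b0; apply/cut_npos0; apply: (oag_refl Hle).
Qed.

Lemma cut_le_embed p q : cut_le le w_cut p q <-> lew (w_embed p) (w_embed q).
Proof.
rewrite cut_leE; apply: iff_trans (cut_npos_embed _ _) (iff_trans _ (oag_subr_le0 w_oag _ _)).
by rewrite -w_embedB.
Qed.

End Center.

Lemma omegaB_surj : value_transcendental w ->
  exists a d, is_cut le d /\ val_equiv (omegaB le v a d) w.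
Proof.
move=> /exists_transcendental_center [a ha].
exists a, (w_cut a); split; first exact: w_cut_is_cut.
have wE := w_omegaE ha.
exists (w_embed a); split => //=.
- by move=> x [f [h [f0 h0 ->]]]; exists f, h; split => //; rewrite w_embedB -!wE.
- by move=> x y _ _; apply: w_embedD.
- by move=> x y _ _; apply: cut_le_embed.
- move=> x [f [h [f0 h0 ->]]].
  exists (omega_fun le v a (w_cut a) f - omega_fun le v a (w_cut a) h).
    by exists f, h.
  by rewrite w_embedB -!wE.
Qed.

End Surjectivity.

Theorem theorem2p7 (L : closedFieldType) (Γ : zmodType) (le : Γ -> Γ -> Prop)
    (v : L -> Γ) (hv : is_valuation le v) :
  (* the map B(a,δ) |-> ω_{B(a,δ)} is well defined with values in V_vt *)
  (forall (a : L) (d : cut Γ), is_cut le d ->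
     is_ext_val le v (omegaB le v a d) /\
     value_transcendental (omegaB le v a d)) /\
  (forall (a b : L) (d e : cut Γ), is_cut le d -> is_cut le e ->
     (forall c, ball le v a d c <-> ball le v b e c) ->
     val_equiv (omegaB le v a d) (omegaB le v b e)) /\
  (* injective *)
  (forall (a b : L) (d e : cut Γ), is_cut le d -> is_cut le e ->
     val_equiv (omegaB le v a d) (omegaB le v b e) ->
     forall c, ball le v a d c <-> ball le v b e c) /\
  (* surjective *)
  (forall w : pvaluation L Γ, is_ext_val le v w -> value_transcendental w ->
     exists (a : L) (d : cut Γ), is_cut le d /\ val_equiv (omegaB le v a d) w) /\
  (* order isomorphism: B ⊇ C  <->  ω_B ≤ ω_C *)
  (forall (a b : L) (d e : cut Γ), is_cut le d -> is_cut le e ->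
     ((forall c, ball le v b e c -> ball le v a d c) <->
      val_le (omegaB le v a d) (omegaB le v b e))).
Proof.
split; first by move=> a d Hd; split; [apply: omegaB_ext_val | apply: omegaB_vt].
split; first by move=> a b d e; apply: omegaB_equiv_of_ball_eq.
split; first by move=> a b d e; apply: ball_eq_of_omegaB_equiv.
split; first by move=> w hw; apply: omegaB_surj.
by move=> a b d e; apply: ball_sub_iff_omegaB_le.
Qed.
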